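(* Consider a monopoly SP maximizing social welfare net of investment cost. (1) For a fixed small-cell density $\lambda>1$, the welfare-maximizing bandwidth split coincides with the revenue-maximizing one, $B_S=\frac{\epsilon N_fB}{\epsilon N_f+N_m}$, $B_M=\frac{N_mB}{\epsilon N_f+N_m}$ with $\epsilon=\lambda^{1/\alpha-1}$, with market-clearing prices. (2) Define $$W(\lambda)=\begin{cases}\frac{1}{1-\alpha}(BR_0)^{1-\alpha}(N_m+N_f)^{\alpha}-I_S\lambda, & 0\le\lambda\le 1,\\ \frac{1}{1-\alpha}(BR_0)^{1-\alpha}\big(N_m+\lambda^{\frac1\alpha-1}N_f\big)^{\alpha}-I_S\lambda, & \lambda>1.\end{cases}$$ Every maximizer $\lambda^{\mathrm{sw}}$ of $W$ over $[0,\infty)$ satisfies $\lambda^{\mathrm{sw}}=0$ or $\lambda^{\mathrm{sw}}=\lambda^*$ where $\lambda^*>1$ solves $$N_f(BR_0)^{1-\alpha}(\lambda^* )^{\frac1\alpha-2}\big(N_f(\lambda^* )^{\frac1\alpha-1}+N_m\big)^{\alpha-1}=I_S.$$ (3) If $\lambda^{\mathrm{sw}}$ is a maximizer of $W$ and $\lambda^{\mathrm{rev}}$ is a maximizer of $S$ (defined in the context) with $\lambda^{\mathrm{sw}}>1$ and $\lambda^{\mathrm{rev}}>1$, then $\lambda^{\mathrm{sw}}>\lambda^{\mathrm{rev}}$.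
   Context: Parameters: $\alpha\in(0,1)$; densities $N_m,N_f>0$ of mobile and fixed users; spectral efficiency $R_0>0$; bandwidth $B>0$; cost $I_S>0$ per unit small-cell density. Utility $u(r)=\frac{r^{1-\alpha}}{1-\alpha}$. For fixed density $\lambda$ and split $(B_M,B_S)$ with $B_M+B_S=B$, mobile users are served by macro-cells and fixed users by small-cells at market-clearing prices, giving welfare $N_m u(B_MR_0/N_m)+N_f u(\lambda B_SR_0/N_f)-I_S\lambda$ and revenue $R_0B_M(B_MR_0/N_m)^{-\alpha}+R_0\lambda B_S(\lambda B_SR_0/N_f)^{-\alpha}-I_S\lambda$; for $\lambda\le1$ all bandwidth is used in macro-cells serving all $N_m+N_f$ users. The revenue (net of investment) under the optimal split is $$S(\lambda)=\begin{cases}(BR_0)^{1-\alpha}(N_m+N_f)^{\alpha}-I_S\lambda, & 0\le\lambda\le 1,\\ (BR_0)^{1-\alpha}\big(N_m+\lambda^{\frac1\alpha-1}N_f\big)^{\alpha}-I_S\lambda, & \lambda>1,\end{cases}$$ and $W(\lambda)$ in the claim is the corresponding net social welfare. *)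

From Stdlib Require Import Reals Lra.
Open Scope R_scope.

(* Real power with the convention 0^y = 0 (used only with y <> 0 at x = 0,
   matching the limits r^(1-a) -> 0 and r * r^(-a) -> 0 as r -> 0+). *)
Definition rpow (x y : R) : R :=
  if Rlt_dec 0 x then Rpower x y else 0.

Definition util (alpha r : R) : R := rpow r (1 - alpha) / (1 - alpha).

(* Net social welfare for density lam > 1 and split (BM, BS):
   mobile users served by macro-cells, fixed users by small-cells. *)
Definition welfare_split (alpha Nm Nf R0 IS lam BM BS : R) : R :=
  Nm * util alpha (BM * R0 / Nm) + Nf * util alpha (lam * BS * R0 / Nf) - IS * lam.

(* Revenue (net of investment) at market-clearing prices. *)
Definition revenue_split (alpha Nm Nf R0 IS lam BM BS : R) : R :=
  R0 * BM * rpow (BM * R0 / Nm) (- alpha)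
  + R0 * lam * BS * rpow (lam * BS * R0 / Nf) (- alpha) - IS * lam.

Definition split_ok (B BM BS : R) : Prop := 0 <= BM /\ 0 <= BS /\ BM + BS = B.

Definition is_max_split (B : R) (f : R -> R -> R) (BM BS : R) : Prop :=
  split_ok B BM BS /\ forall BM' BS', split_ok B BM' BS' -> f BM' BS' <= f BM BS.

Definition is_max_nonneg (f : R -> R) (x : R) : Prop :=
  0 <= x /\ forall y, 0 <= y -> f y <= f x.

(* Net social welfare W(lam) under the optimal split. *)
Definition W (alpha Nm Nf R0 B IS lam : R) : R :=
  if Rle_dec lam 1
  then / (1 - alpha) * Rpower (B * R0) (1 - alpha) * Rpower (Nm + Nf) alpha - IS * lam
  else / (1 - alpha) * Rpower (B * R0) (1 - alpha)
         * Rpower (Nm + Rpower lam (/ alpha - 1) * Nf) alpha - IS * lam.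

(* Revenue S(lam) under the optimal split. *)
Definition S (alpha Nm Nf R0 B IS lam : R) : R :=
  if Rle_dec lam 1
  then Rpower (B * R0) (1 - alpha) * Rpower (Nm + Nf) alpha - IS * lam
  else Rpower (B * R0) (1 - alpha)
         * Rpower (Nm + Rpower lam (/ alpha - 1) * Nf) alpha - IS * lam.

(* Part (1): on the splits with B_M + B_S = B both objectives are positive
   multiples of G(B_M) = N_m (B_M R_0/N_m)^(1-a) + N_f (lam B_S R_0/N_f)^(1-a)
   plus the same constant, because r * r^(-a) = r^(1-a).  G is strictly concave
   along the segment, and the tangent inequality of r |-> r^(1-a) at the
   announced split shows it is the unique maximizer: there the two marginal
   terms cancel, since lam eps = lam^(1/a).

   Parts (2) and (3): for lam > 1, W = c_W h - I_S lam and S = c_S h - I_S lam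
   with h(lam) = (N_m + lam^(1/a-1) N_f)^a strictly increasing and
   c_W = c_S/(1-a) > c_S.  A maximizer of W cannot lie in (0,1] since W is
   strictly decreasing there; one beyond 1 satisfies the first-order condition.
   Comparing the two maximality inequalities rules out lam_rev > lam_sw, and
   the two first-order conditions with c_W <> c_S rule out equality. *)
From Stdlib Require Import Reals Lra.
Open Scope R_scope.

Lemma Rpower_pos x y : 0 < Rpower x y.
Proof. apply exp_pos. Qed.

Lemma Rpower_lt_l_neg a b q : q < 0 -> 0 < a < b -> Rpower b q < Rpower a q.
Proof.
  intros Hq [Ha Hab]. apply exp_increasing.
  pose proof (ln_increasing a b Ha Hab). nra.
Qed.

Lemma Rinv_sub1_pos a : 0 < a < 1 -> 0 < / a - 1.
Proof.
  intros Ha. assert (1 < / a) by (rewrite <- Rinv_1; apply Rinv_lt_contravar; lra).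
  lra.
Qed.

Lemma rpow_pos_eq x y : 0 < x -> rpow x y = Rpower x y.
Proof. intros Hx; unfold rpow; destruct (Rlt_dec 0 x); [reflexivity | lra]. Qed.

Lemma rpow_0 y : rpow 0 y = 0.
Proof. unfold rpow; destruct (Rlt_dec 0 0); [lra | reflexivity]. Qed.

Lemma mul_rpow_opp x a : 0 <= x -> x * rpow x (- a) = rpow x (1 - a).
Proof.
  intros [Hx | <-]; [| now rewrite !rpow_0, Rmult_0_r].
  rewrite !rpow_pos_eq by lra.
  replace (1 - a) with (1 + - a) by ring.
  now rewrite Rpower_plus, Rpower_1.
Qed.

Lemma Rpower_concave_tangent_lt p x x0 : 0 < p < 1 -> 0 < x -> 0 < x0 -> x <> x0 ->
  Rpower x p < Rpower x0 p + p * Rpower x0 (p - 1) * (x - x0).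
Proof.
  intros Hp Hx Hx0 Hne.
  assert (Hd : forall c, 0 < c ->
    derivable_pt_lim (fun t => Rpower t p) c (p * Rpower c (p - 1)))
    by (intros; now apply derivable_pt_lim_power).
  destruct (Rdichotomy _ _ Hne) as [Hlt | Hlt].
  - destruct (MVT_cor2 _ _ x x0 Hlt (fun c Hc => Hd c ltac:(lra))) as [c [Hc [Hc1 Hc2]]].
    assert (Rpower x0 (p - 1) < Rpower c (p - 1)) by (apply Rpower_lt_l_neg; lra).
    assert (0 < p * (Rpower c (p - 1) - Rpower x0 (p - 1)) * (x0 - x))
      by (repeat apply Rmult_lt_0_compat; lra).
    nra.
  - destruct (MVT_cor2 _ _ x0 x Hlt (fun c Hc => Hd c ltac:(lra))) as [c [Hc [Hc1 Hc2]]].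
    assert (Rpower c (p - 1) < Rpower x0 (p - 1)) by (apply Rpower_lt_l_neg; lra).
    assert (0 < p * (Rpower x0 (p - 1) - Rpower c (p - 1)) * (x - x0))
      by (repeat apply Rmult_lt_0_compat; lra).
    nra.
Qed.

Lemma rpow_concave_tangent_lt p x x0 : 0 < p < 1 -> 0 <= x -> 0 < x0 -> x <> x0 ->
  rpow x p < Rpower x0 p + p * Rpower x0 (p - 1) * (x - x0).
Proof.
  intros Hp [Hx | <-] Hx0 Hne.
  - rewrite rpow_pos_eq by lra. now apply Rpower_concave_tangent_lt.
  - assert (E : Rpower x0 (p - 1) * x0 = Rpower x0 p).
    { rewrite <- (Rpower_1 x0) at 2 by lra. rewrite <- Rpower_plus. f_equal; ring. }
    rewrite rpow_0. pose proof (Rpower_pos x0 p). nra.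
Qed.

Lemma rpow_concave_tangent_le p x x0 : 0 < p < 1 -> 0 <= x -> 0 < x0 ->
  rpow x p <= Rpower x0 p + p * Rpower x0 (p - 1) * (x - x0).
Proof.
  intros Hp Hx Hx0. destruct (Req_dec x x0) as [-> | Hne].
  - rewrite rpow_pos_eq by lra. lra.
  - left; now apply rpow_concave_tangent_lt.
Qed.

Lemma is_max_split_affine_iff B (F G : R -> R -> R) c d BM0 BS0 : 0 < c ->
  (forall BM BS, split_ok B BM BS -> F BM BS = c * G BM BS + d) ->
  split_ok B BM0 BS0 ->
  (forall BM BS, split_ok B BM BS -> BM <> BM0 -> G BM BS < G BM0 BS0) ->
  forall BM BS, is_max_split B F BM BS <-> BM = BM0 /\ BS = BS0.
Proof.
  intros Hc HF Hok0 HG BM BS. split.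
  - intros [Hok Hmax]. destruct (Req_dec BM BM0) as [E | E].
    + destruct Hok as [_ [_ H1]], Hok0 as [_ [_ H2]]. split; lra.
    + specialize (HG BM BS Hok E). specialize (Hmax BM0 BS0 Hok0).
      rewrite (HF _ _ Hok), (HF _ _ Hok0) in Hmax. nra.
  - intros [-> ->]. split; [exact Hok0 |]. intros BM BS Hok.
    rewrite (HF _ _ Hok), (HF _ _ Hok0).
    destruct (Req_dec BM BM0) as [-> | E].
    + destruct Hok as [_ [_ H1]], Hok0 as [_ [_ H2]].
      replace BS with BS0 by lra. lra.
    + specialize (HG BM BS Hok E). nra.
Qed.

Section OptimalSplit.

Variables alpha Nm Nf R0 B lam : R.
Hypotheses (Halpha0 : 0 < alpha) (Halpha1 : alpha < 1) (HNm : 0 < Nm) (HNf : 0 < Nf)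
  (HR0 : 0 < R0) (HB : 0 < B) (Hlam : 1 < lam).

Let eps := Rpower lam (/ alpha - 1).
Let BM0 := Nm * B / (eps * Nf + Nm).
Let BS0 := eps * Nf * B / (eps * Nf + Nm).

Definition split_utility BM BS :=
  Nm * rpow (BM * R0 / Nm) (1 - alpha) + Nf * rpow (lam * BS * R0 / Nf) (1 - alpha).

Lemma eps_pos : 0 < eps. Proof. apply Rpower_pos. Qed.

Lemma optimal_split_pos : 0 < BM0 /\ 0 < BS0.
Proof.
  pose proof eps_pos. assert (0 < eps * Nf) by nra.
  split; apply Rdiv_lt_0_compat; nra.
Qed.

Lemma optimal_split_ok : split_ok B BM0 BS0.
Proof.
  pose proof optimal_split_pos. pose proof eps_pos.
  unfold split_ok. split; [| split]; try lra.
  unfold BM0, BS0. field. nra.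
Qed.

Lemma optimal_split_marginals :
  Rpower (BM0 * R0 / Nm) (- alpha) = lam * Rpower (lam * BS0 * R0 / Nf) (- alpha).
Proof.
  pose proof eps_pos. pose proof optimal_split_pos.
  assert (Hx0 : 0 < BM0 * R0 / Nm) by (apply Rdiv_lt_0_compat; nra).
  replace (lam * BS0 * R0 / Nf) with ((lam * eps) * (BM0 * R0 / Nm))
    by (unfold BM0, BS0; field; nra).
  assert (Hle : lam * eps = Rpower lam (/ alpha)).
  { unfold eps. rewrite <- (Rpower_1 lam) at 1 by lra. rewrite <- Rpower_plus.
    f_equal; ring. }
  rewrite <- Rpower_mult_distr by nra. rewrite Hle, Rpower_mult.
  replace (/ alpha * - alpha) with (- (1)) by (field; lra).
  rewrite (Rpower_Ropp lam 1), Rpower_1 by lra. field. lra.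
Qed.

Lemma split_utility_strict_max BM BS : split_ok B BM BS -> BM <> BM0 ->
  split_utility BM BS < split_utility BM0 BS0.
Proof.
  intros [HBM [HBS Hsum]] Hne. pose proof eps_pos. pose proof optimal_split_pos.
  pose proof optimal_split_marginals as Hmarg.
  set (x0 := BM0 * R0 / Nm) in *. set (y0 := lam * BS0 * R0 / Nf) in *.
  assert (Hx0 : 0 < x0) by (apply Rdiv_lt_0_compat; nra).
  assert (Hy0 : 0 < y0) by (apply Rdiv_lt_0_compat; [apply Rmult_lt_0_compat|]; nra).
  assert (Hx : 0 <= BM * R0 / Nm) by (apply Rmult_le_pos, Rlt_le, Rinv_0_lt_compat; nra).
  assert (Hy : 0 <= lam * BS * R0 / Nf)
    by (apply Rmult_le_pos, Rlt_le, Rinv_0_lt_compat; [apply Rmult_le_pos|]; nra).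
  assert (Hxne : BM * R0 / Nm <> x0).
  { intro E; apply Hne. unfold x0 in E.
    apply (Rmult_eq_reg_r (R0 / Nm)); [| apply Rgt_not_eq, Rdiv_lt_0_compat; lra].
    unfold Rdiv in *. lra. }
  assert (Hp : 0 < 1 - alpha < 1) by lra.
  pose proof (rpow_concave_tangent_lt _ _ _ Hp Hx Hx0 Hxne) as Tx.
  pose proof (rpow_concave_tangent_le _ _ _ Hp Hy Hy0) as Ty.
  replace (1 - alpha - 1) with (- alpha) in Tx, Ty by ring.
  (* the first-order terms of the two tangent bounds cancel *)
  assert (Ex : Nm * (BM * R0 / Nm - x0) = R0 * (BM - BM0)) by (unfold x0; field; lra).
  assert (Ey : Nf * (lam * BS * R0 / Nf - y0) = - lam * R0 * (BM - BM0)).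
  { unfold y0. replace BS with (B - BM) by lra. unfold BM0, BS0. field; nra. }
  assert (Hcancel :
      Nm * ((1 - alpha) * Rpower x0 (- alpha) * (BM * R0 / Nm - x0))
    + Nf * ((1 - alpha) * Rpower y0 (- alpha) * (lam * BS * R0 / Nf - y0)) = 0).
  { transitivity ((1 - alpha) * Rpower x0 (- alpha) * (Nm * (BM * R0 / Nm - x0))
      + (1 - alpha) * Rpower y0 (- alpha) * (Nf * (lam * BS * R0 / Nf - y0))); [ring |].
    rewrite Ex, Ey, Hmarg. ring. }
  unfold split_utility. fold x0 y0. rewrite (rpow_pos_eq x0), (rpow_pos_eq y0) by lra.
  apply Rmult_lt_compat_l with (r := Nm) in Tx; [| exact HNm].
  apply Rmult_le_compat_l with (r := Nf) in Ty; [| lra].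
  lra.
Qed.

Lemma welfare_split_max_iff IS BM BS :
  is_max_split B (welfare_split alpha Nm Nf R0 IS lam) BM BS <-> BM = BM0 /\ BS = BS0.
Proof.
  apply (is_max_split_affine_iff B _ split_utility (/ (1 - alpha)) (- IS * lam)).
  - apply Rinv_0_lt_compat; lra.
  - intros BM' BS' _. unfold welfare_split, util, split_utility. field. lra.
  - exact optimal_split_ok.
  - exact split_utility_strict_max.
Qed.

Lemma revenue_split_max_iff IS BM BS :
  is_max_split B (revenue_split alpha Nm Nf R0 IS lam) BM BS <-> BM = BM0 /\ BS = BS0.
Proof.
  apply (is_max_split_affine_iff B _ split_utility 1 (- IS * lam)).
  - lra.
  - intros BM' BS' [HBM [HBS _]]. unfold revenue_split, split_utility.
    set (u := BM' * R0 / Nm). set (v := lam * BS' * R0 / Nf).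
    replace (R0 * BM') with (Nm * u) by (unfold u; field; lra).
    replace (R0 * lam * BS') with (Nf * v) by (unfold v; field; lra).
    assert (0 <= u) by (apply Rmult_le_pos, Rlt_le, Rinv_0_lt_compat; nra).
    assert (0 <= v)
      by (apply Rmult_le_pos, Rlt_le, Rinv_0_lt_compat; [apply Rmult_le_pos|]; nra).
    rewrite !Rmult_assoc, !mul_rpow_opp by assumption. ring.
  - exact optimal_split_ok.
  - exact split_utility_strict_max.
Qed.

End OptimalSplit.

Section DensityValue.

Variables a e Nm Nf IS : R.
Hypotheses (Ha : 0 < a) (He : 0 < e) (HNm : 0 < Nm) (HNf : 0 < Nf).

Definition coverage x := Rpower (Nm + Rpower x e * Nf) a.

Definition coverage_deriv x :=
  a * Rpower (Nm + Rpower x e * Nf) (a - 1) * (e * Rpower x (e - 1) * Nf).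

Definition density_value c x := c * coverage x - IS * x.

Lemma coverage_derivable x : 0 < x -> derivable_pt_lim coverage x (coverage_deriv x).
Proof.
  intros Hx.
  assert (Hin : derivable_pt_lim (fun x => Nm + Rpower x e * Nf) x
                  (0 + e * Rpower x (e - 1) * Nf)).
  { apply (derivable_pt_lim_plus (fun _ => Nm) (fun x => Rpower x e * Nf)).
    - apply derivable_pt_lim_const.
    - apply (derivable_pt_lim_scal_right (fun x => Rpower x e)).
      now apply derivable_pt_lim_power. }
  rewrite Rplus_0_l in Hin.
  apply (derivable_pt_lim_comp (fun x => Nm + Rpower x e * Nf) (fun y => Rpower y a));
    [exact Hin |].
  apply derivable_pt_lim_power. pose proof (Rpower_pos x e). nra.
Qed.

Lemma coverage_deriv_pos x : 0 < coverage_deriv x.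
Proof.
  unfold coverage_deriv.
  pose proof (Rpower_pos (Nm + Rpower x e * Nf) (a - 1)).
  pose proof (Rpower_pos x (e - 1)).
  repeat apply Rmult_lt_0_compat; assumption.
Qed.

Lemma coverage_lt x y : 0 < x -> x < y -> coverage x < coverage y.
Proof.
  intros Hx Hxy. apply Rlt_Rpower_l; [exact Ha |].
  assert (Rpower x e < Rpower y e) by now apply Rlt_Rpower_l.
  pose proof (Rpower_pos x e). split; nra.
Qed.

Lemma density_value_foc c l : 1 < l ->
  (forall y, 1 < y -> density_value c y <= density_value c l) ->
  c * coverage_deriv l = IS.
Proof.
  intros Hl Hmax.
  assert (Hd : derivable_pt_lim (density_value c) l (c * coverage_deriv l - IS * 1)).
  { apply (derivable_pt_lim_minus (fun x => c * coverage x) (fun x => IS * x)).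
    - apply derivable_pt_lim_scal, coverage_derivable. lra.
    - apply (derivable_pt_lim_scal id), derivable_pt_lim_id. }
  pose (pr := exist _ _ Hd : derivable_pt (density_value c) l).
  pose proof (deriv_maximum _ 1 (l + 1) l pr Hl ltac:(lra)
                (fun y Hy _ => Hmax y Hy)) as Hzero.
  rewrite (derive_pt_eq_0 _ _ _ pr Hd) in Hzero. lra.
Qed.

Lemma density_argmax_lt c1 c2 l1 l2 : c1 < c2 -> 1 < l1 -> 1 < l2 ->
  (forall y, 1 < y -> density_value c1 y <= density_value c1 l1) ->
  (forall y, 1 < y -> density_value c2 y <= density_value c2 l2) ->
  l1 < l2.
Proof.
  intros Hc Hl1 Hl2 Hmax1 Hmax2.
  destruct (Rtotal_order l1 l2) as [Hlt | [<- | Hgt]]; [exact Hlt | exfalso | exfalso].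
  - pose proof (density_value_foc c1 l1 Hl1 Hmax1).
    pose proof (density_value_foc c2 l1 Hl1 Hmax2).
    pose proof (coverage_deriv_pos l1). nra.
  - pose proof (Hmax1 l2 Hl2). pose proof (Hmax2 l1 Hl1).
    pose proof (coverage_lt l2 l1 ltac:(lra) Hgt).
    unfold density_value in *. nra.
Qed.

End DensityValue.

Section OptimalDensity.

Variables alpha Nm Nf R0 B IS : R.
Hypotheses (Halpha0 : 0 < alpha) (Halpha1 : alpha < 1) (HNm : 0 < Nm) (HNf : 0 < Nf)
  (HIS : 0 < IS).

Let K := Rpower (B * R0) (1 - alpha).
Let e := / alpha - 1.

Lemma W_eq_density_value y : 1 < y ->
  W alpha Nm Nf R0 B IS y = density_value alpha e Nm Nf IS (/ (1 - alpha) * K) y.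
Proof. intros Hy. unfold W, density_value, coverage. now destruct (Rle_dec y 1); [lra |]. Qed.

Lemma S_eq_density_value y : 1 < y ->
  S alpha Nm Nf R0 B IS y = density_value alpha e Nm Nf IS K y.
Proof. intros Hy. unfold S, density_value, coverage. now destruct (Rle_dec y 1); [lra |]. Qed.

Lemma W_interior_max l : is_max_nonneg (W alpha Nm Nf R0 B IS) l -> 1 < l ->
  forall y, 1 < y -> density_value alpha e Nm Nf IS (/ (1 - alpha) * K) y
                     <= density_value alpha e Nm Nf IS (/ (1 - alpha) * K) l.
Proof.
  intros [_ Hmax] Hl y Hy. rewrite <- !W_eq_density_value by lra. apply Hmax. lra.
Qed.

Lemma S_interior_max l : is_max_nonneg (S alpha Nm Nf R0 B IS) l -> 1 < l ->
  forall y, 1 < y -> density_value alpha e Nm Nf IS K y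
                     <= density_value alpha e Nm Nf IS K l.
Proof.
  intros [_ Hmax] Hl y Hy. rewrite <- !S_eq_density_value by lra. apply Hmax. lra.
Qed.

Lemma W_max_not_in_unit l : is_max_nonneg (W alpha Nm Nf R0 B IS) l -> l <= 1 -> l = 0.
Proof.
  intros [[Hpos | <-] Hmax] Hl; [exfalso | reflexivity].
  specialize (Hmax 0 (Rle_refl 0)). unfold W in Hmax.
  destruct (Rle_dec 0 1), (Rle_dec l 1); try lra. nra.
Qed.

Lemma W_max_foc l : is_max_nonneg (W alpha Nm Nf R0 B IS) l -> 1 < l ->
  Nf * K * Rpower l (/ alpha - 2) * Rpower (Nf * Rpower l (/ alpha - 1) + Nm) (alpha - 1)
  = IS.
Proof.
  intros Hmax Hl.
  pose proof (density_value_foc alpha e Nm Nf IS HNm HNf _ l Hl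
                (W_interior_max l Hmax Hl)) as Hfoc.
  unfold coverage_deriv in Hfoc.
  replace (e - 1) with (/ alpha - 2) in Hfoc by (unfold e; ring).
  replace (Nm + Rpower l e * Nf) with (Nf * Rpower l e + Nm) in Hfoc by ring.
  rewrite <- Hfoc. unfold e. field. lra.
Qed.

Lemma W_argmax_gt_S_argmax lsw lrev :
  is_max_nonneg (W alpha Nm Nf R0 B IS) lsw -> is_max_nonneg (S alpha Nm Nf R0 B IS) lrev ->
  1 < lsw -> 1 < lrev -> lrev < lsw.
Proof.
  intros Hsw Hrev Hlsw Hlrev.
  assert (HK : 0 < K) by apply Rpower_pos.
  assert (Hc : K < / (1 - alpha) * K)
    by (pose proof (Rinv_sub1_pos (1 - alpha) ltac:(lra)); nra).
  assert (He : 0 < e) by (apply Rinv_sub1_pos; lra).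
  apply (density_argmax_lt alpha e Nm Nf IS Halpha0 He HNm HNf K (/ (1 - alpha) * K));
    try assumption.
  - now apply S_interior_max.
  - now apply W_interior_max.
Qed.

End OptimalDensity.

Theorem theorem7 (alpha Nm Nf R0 B IS : R)
  (Halpha0 : 0 < alpha) (Halpha1 : alpha < 1)
  (HNm : 0 < Nm) (HNf : 0 < Nf) (HR0 : 0 < R0) (HB : 0 < B) (HIS : 0 < IS) :
  (forall lam : R, 1 < lam ->
     let eps := Rpower lam (/ alpha - 1) in
     forall BM BS : R,
       (is_max_split B (welfare_split alpha Nm Nf R0 IS lam) BM BS <->
          (BM = Nm * B / (eps * Nf + Nm) /\ BS = eps * Nf * B / (eps * Nf + Nm))) /\
       (is_max_split B (revenue_split alpha Nm Nf R0 IS lam) BM BS <->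
          (BM = Nm * B / (eps * Nf + Nm) /\ BS = eps * Nf * B / (eps * Nf + Nm)))) /\
  (forall lsw : R, is_max_nonneg (W alpha Nm Nf R0 B IS) lsw ->
     lsw = 0 \/
     (1 < lsw /\
      Nf * Rpower (B * R0) (1 - alpha) * Rpower lsw (/ alpha - 2)
         * Rpower (Nf * Rpower lsw (/ alpha - 1) + Nm) (alpha - 1) = IS)) /\
  (forall lsw lrev : R,
     is_max_nonneg (W alpha Nm Nf R0 B IS) lsw ->
     is_max_nonneg (S alpha Nm Nf R0 B IS) lrev ->
     1 < lsw -> 1 < lrev -> lrev < lsw).
Proof.
  split; [| split].
  - intros lam Hlam eps BM BS. split.
    + now apply welfare_split_max_iff.
    + now apply revenue_split_max_iff.
  - intros lsw Hmax. destruct (Rle_lt_dec lsw 1) as [Hle | Hgt].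
    + left. now apply (W_max_not_in_unit alpha Nm Nf R0 B IS).
    + right. split; [exact Hgt |]. now apply W_max_foc.
  - intros lsw lrev. now apply W_argmax_gt_S_argmax.
Qed.
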